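(* Let $D$ be a vertex-supported effective divisor on a metric graph $\Gamma$. If $f\in R(D)$ and $D+(f)$ is an anchor divisor, then $f$ has at most two linear pieces on each edge of $\Gamma$.
   Context: A metric graph $\Gamma=(V,E)$ is a connected undirected graph whose edges have positive real lengths. Divisors are finite formal $\mathbb{Z}$-combinations of points of $\Gamma$; effective means nonnegative coefficients; vertex-supported means support contained in $V$. A rational function is a continuous $f:\Gamma\to\mathbb{R}$, piecewise linear on each edge with finitely many pieces and integer slopes; $(f)=\sum_x\mathrm{ord}_x(f)x$, where $\mathrm{ord}_x(f)$ is the sum of the outgoing slopes of $f$ at $x$. $R(D)$ is the set of rational functions $f$ with $D+(f)$ effective. A divisor $L$ is an anchor divisor if for each edge of $\Gamma$ there is at most one interior point $x$ of that edge with $L(x)>0$. *)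

From HB Require Import structures.
From mathcomp Require Import all_boot all_order all_algebra.
From mathcomp Require Import reals.
From Stdlib Require Import ClassicalEpsilon.

Set Implicit Arguments.
Unset Strict Implicit.
Unset Printing Implicit Defensive.

Import Order.TTheory GRing.Theory Num.Theory.
Local Open Scope ring_scope.

(* A metric graph: finite (multi)graph, possibly with loops, each edge e
   oriented from mg_src e to mg_tgt e (orientation only fixes a
   parametrization [0, mg_len e] of the edge), positive lengths, connected. *)
Record metric_graph (R : realType) := MetricGraph {
  mg_V : finType;
  mg_E : finType;
  mg_src : mg_E -> mg_V;
  mg_tgt : mg_E -> mg_V;
  mg_len : mg_E -> R;
  mg_len_pos : forall e, 0 < mg_len e;
  mg_connected : forall u v : mg_V,
    connect (fun x y => [exists e, ((mg_src e == x) && (mg_tgt e == y))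
                                || ((mg_src e == y) && (mg_tgt e == x))]) u v
}.

Section MG.
Variables (R : realType) (G : metric_graph R).

(* Points of Gamma: a vertex, or the interior point at distance t from the
   source of edge e (valid only when 0 < t < len e). *)
Inductive point := PV of mg_V G | PE of mg_E G & R.

Definition is_point (x : point) : Prop :=
  match x with PV _ => True | PE e t => 0 < t < mg_len e end.

Definition edge_pt (e : mg_E G) (t : R) : point :=
  if t <= 0 then PV (mg_src e)
  else if mg_len e <= t then PV (mg_tgt e) else PE e t.

Definition edge_fun (f : point -> R) (e : mg_E G) : R -> R :=
  fun t => f (edge_pt e t).

Definition is_slope (g : R -> R) (t : R) (s : int) : Prop :=
  exists2 eps : R, 0 < eps &
    forall h : R, 0 < h < eps -> g (t + h) = g t + s%:~R * h.

Definition slope (g : R -> R) (t : R) : int :=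
  epsilon (inhabits 0%R) (is_slope g t).

Definition out_slope_fwd (f : point -> R) e t : int := slope (edge_fun f e) t.
Definition out_slope_bwd (f : point -> R) e t : int :=
  slope (fun u => edge_fun f e (t - u)) 0.

(* ord_x(f): the sum of the outgoing slopes of f at x *)
Definition ord (f : point -> R) (x : point) : int :=
  match x with
  | PV v => \sum_(e | mg_src e == v) out_slope_fwd f e 0
          + \sum_(e | mg_tgt e == v) out_slope_bwd f e (mg_len e)
  | PE e t => out_slope_fwd f e t + out_slope_bwd f e t
  end.

Definition pl_pieces (g : R -> R) (a b : R) (n : nat) : Prop :=
  exists (tb : nat -> R) (s : nat -> int),
    [/\ tb 0%N = a, tb n = b,
        forall i, (i < n)%N -> tb i < tb i.+1
      & forall i, (i < n)%N -> forall x, tb i <= x <= tb i.+1 ->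
          g x = g (tb i) + (s i)%:~R * (x - tb i)].

(* rational function: continuous, piecewise linear on every edge with finitely
   many pieces and integer slopes (continuity is built in: pieces are affine on
   closed intervals and edge endpoints are evaluated at the vertices). *)
Definition rational_fun (f : point -> R) : Prop :=
  forall e, exists n, pl_pieces (edge_fun f e) 0 (mg_len e) n.

Definition is_divisor (D : point -> int) : Prop :=
  exists s : seq point, forall x, is_point x -> D x != 0 -> List.In x s.

Definition effective (D : point -> int) : Prop :=
  forall x, is_point x -> 0 <= D x.

Definition vertex_supported (D : point -> int) : Prop :=
  forall e t, 0 < t < mg_len e -> D (PE e t) = 0.

Definition div_add_principal (D : point -> int) (f : point -> R) : point -> int :=
  fun x => D x + ord f x.

Definition in_RD (D : point -> int) (f : point -> R) : Prop :=
  rational_fun f /\ effective (div_add_principal D f).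

Definition anchor_divisor (L : point -> int) : Prop :=
  forall e t1 t2, 0 < t1 < mg_len e -> 0 < t2 < mg_len e ->
    0 < L (PE e t1) -> 0 < L (PE e t2) -> t1 = t2.

End MG.

From HB Require Import structures.
From mathcomp Require Import all_boot all_order all_algebra.
From mathcomp Require Import reals.
From mathcomp Require Import ring lra.
From Stdlib Require Import Classical ClassicalEpsilon.
Set Implicit Arguments.
Unset Strict Implicit.
Unset Printing Implicit Defensive.

Import Order.TTheory GRing.Theory Num.Theory.
Local Open Scope ring_scope.

(* On an edge, [f] is affine between consecutive breakpoints, and at an
   interior breakpoint its order is the jump of the slope. Since [D] vanishes
   in the interior of edges, effectivity of [D + (f)] makes the slopes
   nondecreasing along the edge, so every slope change creates a point of
   positive coefficient; the anchor condition allows at most one such point,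
   hence at most two linear pieces. *)

Section EdgeFunctions.
Variable R : realType.

Lemma is_slope_uniq (g : R -> R) t s1 s2 :
  is_slope g t s1 -> is_slope g t s2 -> s1 = s2.
Proof.
move=> [e1 e1p H1] [e2 e2p H2].
have m0 : 0 < Order.min e1 e2 by rewrite lt_min e1p e2p.
have m1 : Order.min e1 e2 <= e1 by rewrite ge_min lexx.
have m2 : Order.min e1 e2 <= e2 by rewrite ge_min lexx orbT.
pose h := Order.min e1 e2 / 2.
have h0 : 0 < h by rewrite /h; lra.
have he1 : h < e1 by rewrite /h; lra.
have he2 : h < e2 by rewrite /h; lra.
have /addrI /mulIf : g t + s1%:~R * h = g t + s2%:~R * h.
  by rewrite -H1 ?h0 ?he1 // -H2 ?h0 ?he2.
by move=> /(_ (lt0r_neq0 h0)) /intr_inj.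
Qed.

Lemma slopeE (g : R -> R) t s : is_slope g t s -> slope g t = s.
Proof.
move=> gs; apply/esym/(is_slope_uniq gs).
by apply: epsilon_spec; exists s.
Qed.

Definition edge_ord (g : R -> R) (t : R) : int :=
  slope g t + slope (fun u => g (t - u)) 0.

Lemma pl_pieces_one (g : R -> R) L (a : int) : 0 < L ->
  (forall x, 0 <= x <= L -> g x = g 0 + a%:~R * x) -> pl_pieces g 0 L 1.
Proof.
move=> L0 g_lin; exists (fun i => if i is 0 then 0 else L), (fun=> a).
by split=> // [[]|[]] // _ x /g_lin ->; rewrite subr0.
Qed.

Lemma pl_pieces_two (g : R -> R) L c (a b : int) : 0 < c < L ->
  (forall x, 0 <= x <= c -> g x = g 0 + a%:~R * x) ->
  (forall x, c <= x <= L -> g x = g c + b%:~R * (x - c)) -> pl_pieces g 0 L 2.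
Proof.
move=> /andP[c0 cL] g_left g_right.
exists (fun i => if i is 0 then 0 else if i is 1 then c else L).
exists (fun i => if i is 0 then a else b).
by split=> // [[|[]]|[|[]]] // _ x /g_left ->; rewrite subr0.
Qed.

End EdgeFunctions.

Lemma run_const (T : Type) (s : nat -> T) k m :
  (forall i, (k <= i)%N -> (i.+1 < m)%N -> s i = s i.+1) ->
  forall i, (k <= i < m)%N -> s i = s k.
Proof.
move=> no_jump; elim=> [|i IHi] /andP[ki im]; first by move: ki; rewrite leqn0 => /eqP ->.
move: ki; rewrite leq_eqVlt => /orP[/eqP -> // | ki].
by rewrite -no_jump // IHi // (ltnW im) andbT.
Qed.

Section PiecewiseLinear.
Variables (R : realType) (g : R -> R) (n : nat) (tb : nat -> R) (s : nat -> int).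
Hypothesis tb_incr : forall i, (i < n)%N -> tb i < tb i.+1.
Hypothesis g_affine : forall i, (i < n)%N -> forall x, tb i <= x <= tb i.+1 ->
  g x = g (tb i) + (s i)%:~R * (x - tb i).

Lemma tb_le_mono : {in [pred i | (i <= n)%N] &, {mono tb : i j / (i <= j)%N >-> i <= j}}.
Proof.
apply: Order.NatMonotonyTheory.incn_inP => [i j _ jn k /andP[_ kj]|i _].
  by rewrite inE (leq_trans (ltnW kj)).
exact: tb_incr.
Qed.

Lemma tb_le i j : (i <= j <= n)%N -> tb i <= tb j.
Proof.
by move=> /andP[ij jn]; rewrite tb_le_mono ?inE // (leq_trans ij).
Qed.

Lemma tb_lt i j : (i < j <= n)%N -> tb i < tb j.
Proof.
move=> /andP[ij jn]; apply: lt_le_trans (tb_incr (leq_trans ij jn)) _.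
by apply: tb_le; rewrite ij jn.
Qed.

Lemma slope_piece_start i : (i < n)%N -> slope g (tb i) = s i.
Proof.
move=> lt_in; apply: slopeE; exists (tb i.+1 - tb i); first by rewrite subr_gt0 tb_incr.
move=> h /andP[h0 h1]; rewrite (g_affine lt_in (x := tb i + h)); last first.
  by apply/andP; split; lra.
by rewrite addrAC subrr add0r.
Qed.

Lemma slope_piece_end i : (i < n)%N -> slope (fun u => g (tb i.+1 - u)) 0 = - s i.
Proof.
move=> lt_in; apply: slopeE; exists (tb i.+1 - tb i); first by rewrite subr_gt0 tb_incr.
have tb_lt1 := tb_incr lt_in.
move=> h /andP[h0 h1]; rewrite add0r subr0.
rewrite (g_affine lt_in (x := tb i.+1 - h)); last by apply/andP; split; lra.
rewrite (g_affine lt_in (x := tb i.+1)); last by apply/andP; split; lra.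
rewrite intrN; ring.
Qed.

Lemma edge_ord_breakpoint i : (i.+1 < n)%N -> edge_ord g (tb i.+1) = s i.+1 - s i.
Proof.
by move=> lt_in; rewrite /edge_ord slope_piece_start // slope_piece_end ?(ltnW lt_in).
Qed.

Lemma affine_on_run (a : int) k m : (k <= m <= n)%N ->
  (forall i, (k <= i < m)%N -> s i = a) ->
  forall x, tb k <= x <= tb m -> g x = g (tb k) + a%:~R * (x - tb k).
Proof.
move=> /andP[]; elim: m => [|m IHm] km mn s_a x /andP[kx xm].
  move: km kx; rewrite leqn0 => /eqP -> kx.
  have -> : x = tb 0 by lra.
  by rewrite subrr mulr0 addr0.
move: km; rewrite leq_eqVlt => /orP[/eqP km | km].
  subst k; have -> : x = tb m.+1 by lra.
  by rewrite subrr mulr0 addr0.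
have {IHm} IH y : tb k <= y <= tb m -> g y = g (tb k) + a%:~R * (y - tb k).
  by apply: (IHm km (ltnW mn)) => i /andP[ki im]; apply: s_a; rewrite ki ltnW.
case: (lerP x (tb m)) => [xm'|mx]; first by apply: IH; rewrite kx xm'.
have km' : tb k <= tb m by apply: tb_le; rewrite (ltnW mn) andbT.
rewrite (g_affine mn (x := x)) ?(ltW mx) // IH ?km' ?lexx // s_a ?ltnSn ?andbT //.
ring.
Qed.

Section Anchored.
Variable L : R.
Hypotheses (tb0 : tb 0 = 0) (tbn : tb n = L).
Hypothesis edge_ord_ge0 : forall t, 0 < t < L -> 0 <= edge_ord g t.
Hypothesis edge_ord_gt0_uniq : forall t1 t2, 0 < t1 < L -> 0 < t2 < L ->
  0 < edge_ord g t1 -> 0 < edge_ord g t2 -> t1 = t2.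

Lemma breakpoint_interior i : (i.+1 < n)%N -> 0 < tb i.+1 < L.
Proof.
move=> lt_in; rewrite -tb0 -tbn; apply/andP; split; apply: tb_lt.
  exact: ltnW lt_in.
by rewrite lt_in leqnn.
Qed.

Lemma slope_nondecr i : (i.+1 < n)%N -> s i <= s i.+1.
Proof.
move=> lt_in; rewrite -subr_ge0 -edge_ord_breakpoint //.
exact/edge_ord_ge0/breakpoint_interior.
Qed.

Lemma slope_jump_uniq i j : (i.+1 < n)%N -> (j.+1 < n)%N ->
  s i != s i.+1 -> s j != s j.+1 -> i = j.
Proof.
have ord_gt0 k : (k.+1 < n)%N -> s k != s k.+1 -> 0 < edge_ord g (tb k.+1).
  by move=> lt_kn jump; rewrite edge_ord_breakpoint // subr_gt0 lt_neqAle jump slope_nondecr.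
move=> lt_in lt_jn jump_i jump_j.
have eq_tb := edge_ord_gt0_uniq (breakpoint_interior lt_in) (breakpoint_interior lt_jn)
  (ord_gt0 _ lt_in jump_i) (ord_gt0 _ lt_jn jump_j).
apply/succn_inj/eqP; rewrite eqn_leq -!tb_le_mono ?inE ?(ltnW lt_in) ?(ltnW lt_jn) //.
by rewrite eq_tb lexx.
Qed.

Lemma pl_pieces_at_most_two : 0 < L -> exists m, (m <= 2)%N /\ pl_pieces g 0 L m.
Proof.
move=> L0; have [[j [lt_jn jump_j]] | no_jump] :=
  classic (exists j, (j.+1 < n)%N /\ s j != s j.+1).
- have no_other i : (i.+1 < n)%N -> i != j -> s i = s i.+1.
    move=> lt_in; apply: contraNeq => jump_i.
    by rewrite (slope_jump_uniq lt_in lt_jn jump_i jump_j).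
  have run_left x : tb 0 <= x <= tb j.+1 -> g x = g (tb 0) + (s 0)%:~R * (x - tb 0).
    apply: affine_on_run; first exact: ltnW lt_jn.
    apply: run_const => i _ lt_ij; apply: no_other; first exact: ltn_trans lt_jn.
    by rewrite ltn_eqF.
  have run_right x : tb j.+1 <= x <= tb n ->
      g x = g (tb j.+1) + (s j.+1)%:~R * (x - tb j.+1).
    apply: affine_on_run; first by rewrite (ltnW lt_jn) leqnn.
    apply: run_const => i lt_ji lt_in; apply: no_other => //.
    by rewrite gtn_eqF.
  exists 2%N; split=> //.
  apply: (pl_pieces_two (a := s 0) (b := s j.+1) (breakpoint_interior lt_jn)) => x.
    by have := run_left x; rewrite tb0 subr0; apply.
  by rewrite -tbn; apply: run_right.
have run_all x : tb 0 <= x <= tb n -> g x = g (tb 0) + (s 0)%:~R * (x - tb 0).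
  apply: affine_on_run; first exact: leqnn.
  apply: run_const => i _ lt_in.
  by apply/eqP/negPn/negP => jump_i; apply: no_jump; exists i.
exists 1%N; split=> //; apply: (pl_pieces_one (a := s 0) L0) => x.
by have := run_all x; rewrite tb0 tbn subr0; apply.
Qed.

End Anchored.

End PiecewiseLinear.

Theorem lemma2p15 (R : realType) (G : metric_graph R)
    (D : point G -> int) (f : point G -> R) :
  is_divisor D -> effective D -> vertex_supported D ->
  in_RD D f -> anchor_divisor (div_add_principal D f) ->
  forall e : mg_E G, exists n : nat,
    (n <= 2)%N /\ pl_pieces (edge_fun f e) 0 (mg_len e) n.
Proof.
move=> _ _ D_vertex [f_rat Df_eff] Df_anchor e.
have [n [tb [s [tb0 tbn tb_incr f_affine]]]] := f_rat e.
have ord_interior t : 0 < t < mg_len e ->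
    div_add_principal D f (PE e t) = edge_ord (edge_fun f e) t.
  by move=> t_in; rewrite /div_add_principal D_vertex // add0r.
apply: (pl_pieces_at_most_two tb_incr f_affine tb0 tbn) (mg_len_pos e).
- by move=> t t_in; rewrite -ord_interior //; apply: Df_eff.
- by move=> t1 t2 t1_in t2_in; rewrite -!ord_interior //; apply: Df_anchor.
Qed.
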